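(* Let $S$ and $Y$ be binary and fix constants $c_1,c_2\in[0,1]$. Fix the observed conditional distributions $P(Y=y,S=s\mid T=t)$, $y,s,t\in\{0,1\}$, and write $P_{ys|t}=P(Y=y,S=s\mid T=t)$. Consider all joint distributions of $(S_0,S_1,Y_{00},Y_{01},Y_{10},Y_{11})$ on $\{0,1\}^6$ that are compatible with the observed distributions and satisfy $\mathrm{HR}(T\to S)\le c_1$ and $\mathrm{HR}(S\to Y\mid T=t)\le c_2$ for $t=0,1$, and assume this set is nonempty. Define $$L=\max\{L_1,L_2,L_3,L_4\},\quad L_1=0,\ L_2=P_{11|0}-P_{11|1}-c_1,\ L_3=P(Y=0\mid T=1)-P(Y=0\mid T=0),\ L_4=P_{00|1}-P_{00|0}-c_1,$$ $$U=\min\{U_1,U_2,U_3,U_4\},\quad U_1=P(Y=1\mid T=0),\ U_2=c_1+P_{10|0}+P_{01|1},\ U_3=P(Y=0\mid T=1),\ U_4=1+c_1-P_{01|0}-P_{10|1}.$$ Then every such joint distribution satisfies $L\le \mathrm{HR}(T\to Y)\le U$. Moreover the bounds are sharp: both $L$ and $U$ are attained by joint distributions in this set. In particular, the sharp bounds do not depend on $c_2$.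
   Context: Binary treatment $T\in\{0,1\}$. For $t\in\{0,1\}$, $S_t$ is the potential surrogate under treatment $t$, and for $t$ and surrogate level $s$, $Y_{ts}$ is the potential primary outcome when $T$ is set to $t$ and $S$ to $s$; write $Y_{T=t}=Y_{tS_t}$. The treatment is randomized: $T$ is independent of $(S_0,S_1,(Y_{ts})_{t,s})$, so the observed data determine $P(Y=y,S=s\mid T=t)=P(Y_{tS_t}=y,S_t=s)$. A joint distribution of the potential outcomes is ''compatible'' with given observed distributions if it induces, for each $t$, the given law of $(Y_{tS_t},S_t)$. Harm rates: $\mathrm{HR}(T\to S)=P(S_0>S_1)$ (for binary $S$: $P(S_0=1,S_1=0)$); $\mathrm{HR}(T\to Y)=P(Y_{0S_0}>Y_{1S_1})$ (for binary $Y$: $P(Y_{0S_0}=1,Y_{1S_1}=0)$); for binary $S,Y$, $\mathrm{HR}(S\to Y\mid T=t)=P(Y_{t0}=1,Y_{t1}=0)$. *)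

From HB Require Import structures.
From mathcomp Require Import all_boot all_order all_algebra.
Set Implicit Arguments. Unset Strict Implicit. Unset Printing Implicit Defensive.
Import Order.TTheory GRing.Theory Num.Theory.
Local Open Scope ring_scope.

(* A unit (potential-outcome profile) is ((((S0,S1),Y00),Y01),Y10),Y11) in {0,1}^6,
   with true = 1, false = 0. *)
Definition world := (bool * bool * bool * bool * bool * bool)%type.

Definition Spot (t : bool) (w : world) : bool :=
  let: (s0, s1, _, _, _, _) := w in if t then s1 else s0.

Definition Ypot (t s : bool) (w : world) : bool :=
  let: (_, _, y00, y01, y10, y11) := w in
  match t, s with
  | false, false => y00 | false, true => y01
  | true, false => y10 | true, true => y11 end.

Definition YT (t : bool) (w : world) : bool := Ypot t (Spot t w) w.

Definition is_dist (R : realFieldType) (p : world -> R) : Prop :=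
  (forall w, 0 <= p w) /\ \sum_(w : world) p w = 1.

(* Observed data: obs t y s = P(Y = y, S = s | T = t).
   Compatibility: P(Y_{t S_t} = y, S_t = s) = obs t y s for all t, y, s. *)
Definition compatible (R : realFieldType) (obs : bool -> bool -> bool -> R)
    (p : world -> R) : Prop :=
  forall t y s, \sum_(w : world | (YT t w == y) && (Spot t w == s)) p w = obs t y s.

Definition HR_TS (R : realFieldType) (p : world -> R) : R :=
  \sum_(w : world | Spot false w && ~~ Spot true w) p w.

Definition HR_TY (R : realFieldType) (p : world -> R) : R :=
  \sum_(w : world | YT false w && ~~ YT true w) p w.

Definition HR_SY (R : realFieldType) (p : world -> R) (t : bool) : R :=
  \sum_(w : world | Ypot t false w && ~~ Ypot t true w) p w.

Definition admissible (R : realFieldType) (obs : bool -> bool -> bool -> R)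
    (c1 c2 : R) (p : world -> R) : Prop :=
  [/\ is_dist p, compatible obs p, HR_TS p <= c1 &
      forall t, HR_SY p t <= c2].

Definition PY (R : realFieldType) (obs : bool -> bool -> bool -> R) (t y : bool) : R :=
  obs t y false + obs t y true.

Definition lowerL (R : realFieldType) (obs : bool -> bool -> bool -> R) (c1 : R) : R :=
  Num.max (Num.max 0 (obs false true true - obs true true true - c1))
          (Num.max (PY obs true false - PY obs false false)
                   (obs true false false - obs false false false - c1)).

Definition upperU (R : realFieldType) (obs : bool -> bool -> bool -> R) (c1 : R) : R :=
  Num.min (Num.min (PY obs false true)
                   (c1 + obs false true false + obs true false true))
          (Num.min (PY obs true false)
                   (1 + c1 - obs false false true - obs true true false)).

(* Only the joint law q of ((Y_{T=0}, S_0), (Y_{T=1}, S_1)) matters: q is a coupling of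
   the two observed laws of (Y, S), HR(T -> S) is its mass on {S_0 = 1, S_1 = 0} and
   HR(T -> Y) its mass on {Y_{T=0} = 1, Y_{T=1} = 0}.  Conversely every such coupling is
   realised by units whose outcome Y_{ts} does not depend on s, for which
   HR(S -> Y | T = t) = 0.  The bounds L <= HR(T -> Y) <= U
   are linear consequences of the marginal constraints.  For sharpness, split the observed
   masses into pieces, lay the pieces of each law consecutively on [0, 1] and couple them
   by the lengths of the overlaps (a quantile coupling); for a suitable order of the pieces,
   one of three depending on the data, the harm mass is at most L.  Negating Y_{T=1}
   replaces the harm by its complement in {Y_{T=0} = 1}, which turns the attainment of U
   into that of L for the flipped observed laws. *)

From HB Require Import structures.
From mathcomp Require Import all_boot all_order all_algebra.
From mathcomp Require Import lra.
Set Implicit Arguments. Unset Strict Implicit. Unset Printing Implicit Defensive.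
Import Order.TTheory GRing.Theory Num.Theory.
Local Open Scope ring_scope.

Section Pushforward.
Variables (R : nmodType) (A B : finType) (f : A -> B).

Definition pushforward (mu : A -> R) (b : B) : R := \sum_(a | f a == b) mu a.

Lemma sum_pushforward (mu : A -> R) (P : pred B) :
  \sum_(b | P b) pushforward mu b = \sum_(a | P (f a)) mu a.
Proof.
rewrite (partition_big f P) //; apply: eq_bigr => b Pb.
by apply: eq_bigl => a; case: eqP => [->|]; rewrite ?Pb ?andbF.
Qed.

End Pushforward.

Lemma pushforwardK (R : nmodType) (A B : finType) (f : A -> B) (g : B -> A)
    (mu : B -> R) :
  cancel g f -> pushforward f (pushforward g mu) =1 mu.
Proof.
move=> gK b; rewrite /pushforward sum_pushforward.
by under eq_bigl do rewrite gK; rewrite big_pred1_eq.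
Qed.

Lemma pushforward_ge0 (R : numDomainType) (A B : finType) (f : A -> B) (mu : A -> R) :
  (forall a, 0 <= mu a) -> forall b, 0 <= pushforward f mu b.
Proof. by move=> mu_ge0 b; apply: sumr_ge0. Qed.

Section Couplings.
Variable R : realFieldType.
Implicit Types (obs : bool -> bool -> bool -> R) (p : world -> R)
  (q : (bool * bool) * (bool * bool) -> R).

(* A pair (y, s) is a value of (Y, S); a point v of (bool * bool) * (bool * bool) is a value
   of ((Y_{T=0}, S_0), (Y_{T=1}, S_1)), and side t v its component for treatment t. *)
Definition side (t : bool) (v : (bool * bool) * (bool * bool)) : bool * bool :=
  if t then v.2 else v.1.

Definition outcomes (w : world) : (bool * bool) * (bool * bool) :=
  ((YT false w, Spot false w), (YT true w, Spot true w)).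

Definition joint p := pushforward outcomes p.

Definition coupling obs q : Prop :=
  (forall v, 0 <= q v) /\
  forall t y s, \sum_(v | side t v == (y, s)) q v = obs t y s.

Definition harmS q : R := \sum_(v | v.1.2 && ~~ v.2.2) q v.
Definition harmY q : R := \sum_(v | v.1.1 && ~~ v.2.1) q v.

Lemma sum_quad (P : pred ((bool * bool) * (bool * bool))) q :
  \sum_(v | P v) q v =
  \sum_(y0 : bool) \sum_(s0 : bool) \sum_(y1 : bool) \sum_(s1 : bool)
    (if P ((y0, s0), (y1, s1)) then q ((y0, s0), (y1, s1)) else 0).
Proof.
have sum_pair (I J : finType) (F : I * J -> R) :
  \sum_(v : I * J) F v = \sum_(i : I) \sum_(j : J) F (i, j).
  by rewrite pair_bigA; apply: eq_bigr => -[].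
rewrite big_mkcond !sum_pair; apply: eq_bigr => y0 _; apply: eq_bigr => s0 _.
by rewrite sum_pair.
Qed.

Lemma admissible_joint obs c1 c2 p : admissible obs c1 c2 p ->
  [/\ coupling obs (joint p), \sum_v joint p v = 1, harmS (joint p) <= c1
    & HR_TY p = harmY (joint p)].
Proof.
case=> -[p_ge0 p1] p_obs HRS _; split.
- split; first exact: pushforward_ge0.
  move=> t y s; rewrite sum_pushforward -p_obs.
  by apply: eq_bigl => w; case: t.
- by rewrite sum_pushforward.
- by rewrite /harmS sum_pushforward.
- by rewrite /harmY sum_pushforward.
Qed.

Definition embed (v : (bool * bool) * (bool * bool)) : world :=
  let: ((y0, s0), (y1, s1)) := v in (s0, s1, y0, y0, y1, y1).

Lemma embedK : cancel embed outcomes.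
Proof. by case=> -[y0 s0] [y1 s1]; case: s0; case: s1. Qed.

Definition lift_coupling q := pushforward embed q.

Lemma lift_admissible obs c1 c2 q :
  coupling obs q -> \sum_v q v = 1 -> harmS q <= c1 -> 0 <= c2 ->
  admissible obs c1 c2 (lift_coupling q) /\ HR_TY (lift_coupling q) = harmY q.
Proof.
move=> [q_ge0 q_obs] q1 HRS c2_ge0.
have sum_lift (P : pred _) : \sum_(w | P (outcomes w)) lift_coupling q w = \sum_(v | P v) q v.
  rewrite -sum_pushforward; apply: eq_bigr => v _; exact: (pushforwardK q embedK).
split; [split; [split|..] |].
- exact: pushforward_ge0.
- by rewrite -q1 -(sum_lift predT).
- move=> t y s; rewrite -q_obs -sum_lift.
  by apply: eq_bigl => w; case: t.
- by move: HRS; rewrite /harmS -(sum_lift (fun v => v.1.2 && ~~ v.2.2)).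
- move=> t; rewrite /HR_SY sum_pushforward big_pred0 //.
  by case=> -[y0 s0] [y1 s1]; case: t; rewrite /= andbN.
- by rewrite /harmY -(sum_lift (fun v => v.1.1 && ~~ v.2.1)).
Qed.

End Couplings.

Ltac pose_quad_ge0 H :=
  let inst y0 s0 y1 s1 := (move: (H ((y0, s0), (y1, s1)))) in
  inst false false false false; inst false false false true;
  inst false false true false; inst false false true true;
  inst false true false false; inst false true false true;
  inst false true true false; inst false true true true;
  inst true false false false; inst true false false true;
  inst true false true false; inst true false true true;
  inst true true false false; inst true true false true;
  inst true true true false; inst true true true true.

Section CouplingFacts.
Variables (R : realFieldType) (obs : bool -> bool -> bool -> R).
Implicit Type q : (bool * bool) * (bool * bool) -> R.

Definition observed_law (t : bool) : Prop :=
  [/\ 0 <= obs t false false, 0 <= obs t false true, 0 <= obs t true false,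
      0 <= obs t true true
    & obs t false false + obs t false true + obs t true false + obs t true true = 1].

Lemma coupling_observed_law q t : coupling obs q -> \sum_v q v = 1 -> observed_law t.
Proof.
case=> q_ge0 q_obs; rewrite /observed_law -!q_obs (sum_quad predT) => q1.
split; try by apply: sumr_ge0 => v _.
by move: q1; rewrite !sum_quad !big_bool; case: t => /=; lra.
Qed.

Lemma coupling_total q : coupling obs q -> observed_law false -> \sum_v q v = 1.
Proof.
case=> _ q_obs [_ _ _ _ <-].
by rewrite -!q_obs (sum_quad predT) !sum_quad !big_bool /=; lra.
Qed.

Lemma coupling_harmS_ge q : coupling obs q ->
  obs false false true + obs false true true - (obs true false true + obs true true true)
  <= harmS q.
Proof.
case=> q_ge0 q_obs; rewrite /harmS -!q_obs !sum_quad !big_bool /=.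
by pose_quad_ge0 q_ge0 => *; lra.
Qed.

Lemma coupling_harmY_bounds c1 q :
  coupling obs q -> \sum_v q v = 1 -> harmS q <= c1 ->
  lowerL obs c1 <= harmY q <= upperU obs c1.
Proof.
case=> q_ge0 q_obs; rewrite (sum_quad predT) /harmS /harmY /lowerL /upperU /PY.
rewrite -!q_obs !sum_quad !big_bool /=; pose_quad_ge0 q_ge0 => *.
by rewrite ge_max le_min !ge_max !le_min; repeat (apply/andP; split); lra.
Qed.

Definition flipY (v : (bool * bool) * (bool * bool)) := (v.1, (~~ v.2.1, v.2.2)).

Lemma coupling_flipY q :
  coupling (fun t y s => obs t (if t then ~~ y else y) s) q ->
  [/\ coupling obs (q \o flipY), harmS (q \o flipY) = harmS q
    & harmY (q \o flipY) = obs false true false + obs false true true - harmY q].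
Proof.
case=> q_ge0 q_obs; split.
- split=> [v|t y s]; first exact: q_ge0.
  have := q_obs t (if t then ~~ y else y) s.
  by rewrite !sum_quad !big_bool; case: t; case: y; case: s => /=; lra.
- by rewrite /harmS !sum_quad !big_bool /=; lra.
- move: (q_obs false true false) (q_obs false true true).
  by rewrite /harmY !sum_quad !big_bool /=; lra.
Qed.

End CouplingFacts.

Ltac case_min_max :=
  let flat x := lazymatch x with
    | context [Order.min _ _] => fail | context [Order.max _ _] => fail | _ => idtac end in
  repeat match goal with
  | |- context [Order.min ?x ?y] => flat x; flat y; let h := fresh in
      rewrite [Order.min x y]minEle; case: (leP x y) => h
  | |- context [Order.max ?x ?y] => flat x; flat y; let h := fresh in
      rewrite [Order.max x y]maxEle; case: (leP x y) => h
  end.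

Section Overlap.
Variable R : realDomainType.
Implicit Types a b c d m : R.

Definition overlap a b c d : R := Num.max 0 (Num.min b d - Num.max a c).

Lemma overlap_ge0 a b c d : 0 <= overlap a b c d.
Proof. by rewrite le_max lexx. Qed.

Lemma overlapC a b c d : overlap a b c d = overlap c d a b.
Proof. by rewrite /overlap [Num.min b d]minC [Num.max a c]maxC. Qed.

Lemma overlap_split a b c m d :
  c <= m -> m <= d -> overlap a b c m + overlap a b m d = overlap a b c d.
Proof. by move=> cm md; rewrite /overlap; case_min_max; lra. Qed.

Lemma overlap_id a b c d : c <= a -> a <= b -> b <= d -> overlap a b c d = b - a.
Proof. by move=> ca ab bd; rewrite /overlap; case_min_max; lra. Qed.

Lemma overlap_eq0l [a b c d] : b <= c -> overlap a b c d = 0.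
Proof. by move=> bc; rewrite /overlap; case_min_max; lra. Qed.

Lemma overlap_empty a b c : overlap a b c c = 0.
Proof. by rewrite /overlap; case_min_max; lra. Qed.

Lemma overlap_eq0r [a b c d] : d <= a -> overlap a b c d = 0.
Proof. by move=> da; rewrite /overlap; case_min_max; lra. Qed.

Lemma overlap_le_subl [a b c d] : c <= b -> overlap a b c d <= b - c.
Proof. by move=> cb; rewrite /overlap; case_min_max; lra. Qed.

Lemma overlap_le_subr [a b c d] : a <= d -> overlap a b c d <= d - a.
Proof. by move=> ad; rewrite /overlap; case_min_max; lra. Qed.

End Overlap.

Arguments overlap {R} : simpl never.

Section IntervalCoupling.
Variable R : realDomainType.
Implicit Types (s t u : seq R) (a b : R).

Fixpoint prefix_sum u (i : nat) : R :=
  if i is i'.+1 then prefix_sum u i' + u`_i' else 0.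

Lemma prefix_sum_homo u :
  (forall k, 0 <= u`_k) -> {homo prefix_sum u : i j / (i <= j)%N >-> i <= j}.
Proof.
move=> u_ge0; apply: homo_leq => [x|y x z|i]; [exact: lexx | exact: le_trans |].
by rewrite /= lerDl.
Qed.

Lemma sum_overlap_prefix_sum u a b m n : (forall k, 0 <= u`_k) -> (m <= n)%N ->
  \sum_(m <= j < n) overlap a b (prefix_sum u j) (prefix_sum u j.+1) =
  overlap a b (prefix_sum u m) (prefix_sum u n).
Proof.
move=> u_ge0; elim: n => [|n IHn].
  by rewrite leqn0 => /eqP->; rewrite big_geq // overlap_empty.
rewrite leq_eqVlt => /predU1P[-> | lt_mn]; first by rewrite big_geq // overlap_empty.
rewrite big_nat_recr //= IHn // overlap_split //; last by rewrite lerDl.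
exact: prefix_sum_homo.
Qed.

Definition cell s t (i j : nat) : R :=
  overlap (prefix_sum s i) (prefix_sum s i.+1) (prefix_sum t j) (prefix_sum t j.+1).

Lemma cell_ge0 s t i j : 0 <= cell s t i j.
Proof. exact: overlap_ge0. Qed.

Lemma cellC s t i j : cell s t i j = cell t s j i.
Proof. exact: overlapC. Qed.

Lemma sum_cells s t i1 i2 j1 j2 :
  (forall k, 0 <= s`_k) -> (forall k, 0 <= t`_k) -> (i1 <= i2)%N -> (j1 <= j2)%N ->
  \sum_(i1 <= i < i2) \sum_(j1 <= j < j2) cell s t i j =
  overlap (prefix_sum s i1) (prefix_sum s i2) (prefix_sum t j1) (prefix_sum t j2).
Proof.
move=> s_ge0 t_ge0 i12 j12.
under eq_bigr do rewrite sum_overlap_prefix_sum // overlapC.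
by rewrite sum_overlap_prefix_sum // overlapC.
Qed.

Lemma sum_row s t i : (forall k, 0 <= s`_k) -> (forall k, 0 <= t`_k) ->
  prefix_sum s (size s) = prefix_sum t (size t) -> (i < size s)%N ->
  \sum_(j < size t) cell s t i j = s`_i.
Proof.
move=> s_ge0 t_ge0 st i_lt.
rewrite -(big_mkord xpredT) sum_overlap_prefix_sum // overlap_id /=.
- by rewrite addrC addKr.
- exact: (prefix_sum_homo s_ge0 (leq0n i)).
- by rewrite lerDl.
- by rewrite -st; exact: (prefix_sum_homo s_ge0 i_lt).
Qed.

End IntervalCoupling.

Arguments cell {R} : simpl never.
Arguments sum_cells {R s t} i1 i2 j1 j2.
Arguments sum_row {R s t} i.

Section LabelledCoupling.
Variables (R : realDomainType) (X : finType) (s t : seq R) (ls lt : nat -> X).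

Definition interval_coupling (v : X * X) : R :=
  \sum_(i < size s | ls i == v.1) \sum_(j < size t | lt j == v.2) cell s t i j.

Lemma sum_interval_coupling (P Q : pred X) :
  \sum_(v | P v.1 && Q v.2) interval_coupling v =
  \sum_(i < size s | P (ls i)) \sum_(j < size t | Q (lt j)) cell s t i j.
Proof.
transitivity (\sum_(u | P u) \sum_(w | Q w) interval_coupling (u, w)).
  by rewrite [RHS]pair_big_dep; apply: eq_bigr => -[].
under eq_bigr => u _ do rewrite /interval_coupling /= exchange_big.
rewrite -(sum_pushforward (fun i : 'I_(size s) => ls i)); apply: eq_bigr => u _.
apply: eq_bigr => i _; exact: (sum_pushforward (fun j : 'I_(size t) => lt j)).
Qed.

End LabelledCoupling.

Lemma coupling_interval (R : realFieldType) (obs : bool -> bool -> bool -> R)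
    (m0 m1 : seq R) (l0 l1 : nat -> bool * bool) :
  (forall k, 0 <= m0`_k) -> (forall k, 0 <= m1`_k) ->
  prefix_sum m0 (size m0) = prefix_sum m1 (size m1) ->
  (forall y s, \sum_(i < size m0 | l0 i == (y, s)) m0`_i = obs false y s) ->
  (forall y s, \sum_(j < size m1 | l1 j == (y, s)) m1`_j = obs true y s) ->
  coupling obs (interval_coupling m0 m1 l0 l1).
Proof.
move=> m0_ge0 m1_ge0 m01 obs0 obs1; split=> [v|[] y s].
- by apply: sumr_ge0 => i _; apply: sumr_ge0 => j _; exact: cell_ge0.
- rewrite -obs1 (eq_bigl (fun v => predT v.1 && pred1 (y, s) v.2)) //.
  rewrite (sum_interval_coupling _ _ _ _ predT) exchange_big; apply: eq_bigr => j _.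
  by under eq_bigr do rewrite cellC; rewrite sum_row.
- rewrite -obs0 (eq_bigl (fun v => pred1 (y, s) v.1 && predT v.2)); last first.
    by move=> v; rewrite andbT.
  by rewrite (sum_interval_coupling _ _ _ _ _ predT); apply: eq_bigr => i _; rewrite sum_row.
Qed.

Ltac expand_sums :=
  rewrite ?/index_iota /=;
  repeat (rewrite big_mkcond ?big_ord_recr ?big_ord0 ?big_cons ?big_nil /=).

Lemma split_sum_between (R : realDomainType) (a0 b0 a1 b1 lo hi : R) :
  a0 <= b0 -> a1 <= b1 -> a0 + a1 <= hi -> lo <= b0 + b1 -> lo <= hi ->
  exists k0 k1, [/\ a0 <= k0 <= b0, a1 <= k1 <= b1 & lo <= k0 + k1 <= hi].
Proof.
move=> *; pose s := Num.max (a0 + a1) lo.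
exists (Num.min b0 (s - a1)), (s - Num.min b0 (s - a1)).
by rewrite /s; case_min_max; split; apply/andP; split; lra.
Qed.

Section Sharpness.
Variables (R : realFieldType) (obs : bool -> bool -> bool -> R) (c1 L : R).
Local Notation x00 := (obs false false false).
Local Notation x01 := (obs false false true).
Local Notation x10 := (obs false true false).
Local Notation x11 := (obs false true true).
Local Notation z00 := (obs true false false).
Local Notation z01 := (obs true false true).
Local Notation z10 := (obs true true false).
Local Notation z11 := (obs true true true).

(* k0 and k1 are the parts of x01 and x11 moved from S_0 = 1 to S_1 = 0 (the S-harm);
   the kept parts x01 - k0 and x11 - k1 must stay at S_1 = 1. *)
Definition budget_split (k0 k1 : R) : Prop :=
  [/\ 0 <= k0 <= x01, 0 <= k1 <= x11, k0 + k1 <= c1,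
      x01 + x11 - (z01 + z11) <= k0 + k1
    & [/\ 0 <= L, x10 + x11 - (z10 + z11) <= L, x11 - k1 - z11 <= L
        & z00 - x00 - k0 <= L]].

(* In each case the pieces are ordered so that the kept parts meet only S_1 = 1 and the
   Y-harm lies in one or two blocks of cells whose total overlap is bounded by L. *)
Lemma coupling_D_overflow k0 k1 :
  observed_law obs false -> observed_law obs true -> budget_split k0 k1 ->
  z11 < x11 - k1 -> exists q, [/\ coupling obs q, harmS q <= c1 & harmY q <= L].
Proof.
move=> [? ? ? ? ?] [? ? ? ? ?] [/andP[? ?] /andP[? ?] ? ? [? ? ? ?]] D_gt.
pose m0 := [:: x11 - k1; x01 - k0; x00; k0; x10; k1].
pose m1 := [:: z11; z01; z00; z10].
have m0_ge0 k : 0 <= m0`_k by case: k => [|[|[|[|[|[|k]]]]]]; rewrite /m0 /= ?nth_nil; lra.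
have m1_ge0 k : 0 <= m1`_k by case: k => [|[|[|[|k]]]]; rewrite /m1 /= ?nth_nil; lra.
have m01 : prefix_sum m0 (size m0) = prefix_sum m1 (size m1) by rewrite /m0 /m1 /=; lra.
pose l0 := nth (false, false)
  [:: (true, true); (false, true); (false, false); (false, true); (true, false); (true, true)].
pose l1 := nth (false, false) [:: (true, true); (false, true); (false, false); (true, false)].
exists (interval_coupling m0 m1 l0 l1); split.
- by apply: coupling_interval => // -[] []; rewrite /m0 /m1; expand_sums; lra.
- rewrite /harmS (sum_interval_coupling _ _ _ _ (fun u => u.2) (fun w => ~~ w.2)).
  have := sum_cells 0 2 2 4 m0_ge0 m1_ge0 isT isT.
  rewrite overlap_eq0l; last by rewrite /m0 /m1 /=; lra.
  move: (sum_row 3 m0_ge0 m1_ge0 m01 isT) (sum_row 5 m0_ge0 m1_ge0 m01 isT).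
  move: (cell_ge0 m0 m1 3 0) (cell_ge0 m0 m1 3 1) (cell_ge0 m0 m1 5 0) (cell_ge0 m0 m1 5 1).
  rewrite /m0 /m1 /l0 /l1; expand_sums; lra.
- rewrite /harmY (sum_interval_coupling _ _ _ _ (fun u => u.1) (fun w => ~~ w.1)).
  have D1 : \sum_(0 <= i < 1) \sum_(1 <= j < 3) cell m0 m1 i j <= x11 - k1 - z11.
    by rewrite sum_cells //; apply: le_trans (overlap_le_subl _) _; rewrite /m0 /m1 /=; lra.
  have CD2 : \sum_(4 <= i < 6) \sum_(1 <= j < 3) cell m0 m1 i j <= L - (x11 - k1 - z11).
    rewrite sum_cells //; have [le_z10|lt_z10] := leP z10 (x10 + k1).
    + by apply: le_trans (overlap_le_subr _) _; rewrite /m0 /m1 /=; lra.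
    + by rewrite overlap_eq0r; rewrite /m0 /m1 /=; lra.
  move: D1 CD2; rewrite /m0 /m1 /l0 /l1; expand_sums; lra.
Qed.

Lemma coupling_no_overflow k0 k1 :
  observed_law obs false -> observed_law obs true -> budget_split k0 k1 ->
  x11 - k1 <= z11 -> x01 - k0 <= z01 ->
  exists q, [/\ coupling obs q, harmS q <= c1 & harmY q <= L].
Proof.
move=> [? ? ? ? ?] [? ? ? ? ?] [/andP[? ?] /andP[? ?] ? ? [? ? ? ?]] D_le B_le.
pose m0 := [:: x11 - k1; x10; k1; x00; k0; x01 - k0].
pose m1 := [:: z11; z10; z00; z01].
have m0_ge0 k : 0 <= m0`_k by case: k => [|[|[|[|[|[|k]]]]]]; rewrite /m0 /= ?nth_nil; lra.
have m1_ge0 k : 0 <= m1`_k by case: k => [|[|[|[|k]]]]; rewrite /m1 /= ?nth_nil; lra.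
have m01 : prefix_sum m0 (size m0) = prefix_sum m1 (size m1) by rewrite /m0 /m1 /=; lra.
pose l0 := nth (false, false)
  [:: (true, true); (true, false); (true, true); (false, false); (false, true); (false, true)].
pose l1 := nth (false, false) [:: (true, true); (true, false); (false, false); (false, true)].
exists (interval_coupling m0 m1 l0 l1); split.
- by apply: coupling_interval => // -[] []; rewrite /m0 /m1; expand_sums; lra.
- rewrite /harmS (sum_interval_coupling _ _ _ _ (fun u => u.2) (fun w => ~~ w.2)).
  have := sum_cells 0 1 1 3 m0_ge0 m1_ge0 isT isT.
  rewrite overlap_eq0l; last by rewrite /m0 /m1 /=; lra.
  have := sum_cells 5 6 1 3 m0_ge0 m1_ge0 isT isT.
  rewrite overlap_eq0r; last by rewrite /m0 /m1 /=; lra.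
  move: (sum_row 2 m0_ge0 m1_ge0 m01 isT) (sum_row 4 m0_ge0 m1_ge0 m01 isT).
  move: (cell_ge0 m0 m1 2 0) (cell_ge0 m0 m1 2 3) (cell_ge0 m0 m1 4 0) (cell_ge0 m0 m1 4 3).
  rewrite /m0 /m1 /l0 /l1; expand_sums; lra.
- rewrite /harmY (sum_interval_coupling _ _ _ _ (fun u => u.1) (fun w => ~~ w.1)).
  have DCD : \sum_(0 <= i < 3) \sum_(2 <= j < 4) cell m0 m1 i j <= L.
    rewrite sum_cells //; have [le_z|lt_z] := leP (z11 + z10) (x11 + x10).
    + by apply: le_trans (overlap_le_subl _) _; rewrite /m0 /m1 /=; lra.
    + by rewrite overlap_eq0l; rewrite /m0 /m1 /=; lra.
  move: DCD; rewrite /m0 /m1 /l0 /l1; expand_sums; lra.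
Qed.

Lemma coupling_B_overflow k0 k1 :
  observed_law obs false -> observed_law obs true -> budget_split k0 k1 ->
  x11 - k1 <= z11 -> z01 < x01 - k0 ->
  exists q, [/\ coupling obs q, harmS q <= c1 & harmY q <= L].
Proof.
move=> [? ? ? ? ?] [? ? ? ? ?] [/andP[? ?] /andP[? ?] ? ? [? ? ? ?]] D_le B_gt.
pose m0 := [:: x01 - k0; x11 - k1; x10; k1; x00; k0].
pose m1 := [:: z01; z11; z10; z00].
have m0_ge0 k : 0 <= m0`_k by case: k => [|[|[|[|[|[|k]]]]]]; rewrite /m0 /= ?nth_nil; lra.
have m1_ge0 k : 0 <= m1`_k by case: k => [|[|[|[|k]]]]; rewrite /m1 /= ?nth_nil; lra.
have m01 : prefix_sum m0 (size m0) = prefix_sum m1 (size m1) by rewrite /m0 /m1 /=; lra.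
pose l0 := nth (false, false)
  [:: (false, true); (true, true); (true, false); (true, true); (false, false); (false, true)].
pose l1 := nth (false, false) [:: (false, true); (true, true); (true, false); (false, false)].
exists (interval_coupling m0 m1 l0 l1); split.
- by apply: coupling_interval => // -[] []; rewrite /m0 /m1; expand_sums; lra.
- rewrite /harmS (sum_interval_coupling _ _ _ _ (fun u => u.2) (fun w => ~~ w.2)).
  have := sum_cells 0 2 2 4 m0_ge0 m1_ge0 isT isT.
  rewrite overlap_eq0l; last by rewrite /m0 /m1 /=; lra.
  move: (sum_row 3 m0_ge0 m1_ge0 m01 isT) (sum_row 5 m0_ge0 m1_ge0 m01 isT).
  move: (cell_ge0 m0 m1 3 0) (cell_ge0 m0 m1 3 1) (cell_ge0 m0 m1 5 0) (cell_ge0 m0 m1 5 1).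
  rewrite /m0 /m1 /l0 /l1; expand_sums; lra.
- rewrite /harmY (sum_interval_coupling _ _ _ _ (fun u => u.1) (fun w => ~~ w.1)).
  have := sum_cells 1 4 0 1 m0_ge0 m1_ge0 isT isT.
  rewrite overlap_eq0r; last by rewrite /m0 /m1 /=; lra.
  have DCD : \sum_(1 <= i < 4) \sum_(3 <= j < 4) cell m0 m1 i j <= L.
    rewrite sum_cells //; have [le_z|lt_z] := leP (prefix_sum m1 3) (prefix_sum m0 4).
    + by apply: le_trans (overlap_le_subl _) _; rewrite /m0 /m1 /= in le_z *; lra.
    + by rewrite (overlap_eq0l (ltW lt_z)).
  move: DCD; rewrite /m0 /m1 /l0 /l1; expand_sums; lra.
Qed.

Lemma budget_split_exists :
  observed_law obs false -> observed_law obs true -> 0 <= c1 ->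
  x01 + x11 - (z01 + z11) <= c1 -> lowerL obs c1 <= L -> exists k0 k1, budget_split k0 k1.
Proof.
move=> [? ? ? ? ?] [? ? ? ? ?] ? ?.
rewrite /lowerL /PY !ge_max => /andP[/andP[? ?] /andP[? ?]].
have [|||||k0 [k1 [/andP[k0_ge ?] /andP[k1_ge ?] /andP[? ?]]]] :=
  split_sum_between (a0 := Num.max 0 (z00 - x00 - L)) (b0 := x01)
    (a1 := Num.max 0 (x11 - z11 - L)) (b1 := x11) (lo := x01 + x11 - (z01 + z11)) (hi := c1).
- by rewrite ge_max; apply/andP; split; lra.
- by rewrite ge_max; apply/andP; split; lra.
- by case_min_max; lra.
- lra.
- lra.
move: k0_ge k1_ge; rewrite !ge_max => /andP[? ?] /andP[? ?].
by exists k0, k1; split; try apply/andP; try split; lra.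
Qed.

Lemma coupling_harmY_le_exists :
  observed_law obs false -> observed_law obs true -> 0 <= c1 ->
  x01 + x11 - (z01 + z11) <= c1 -> lowerL obs c1 <= L ->
  exists q, [/\ coupling obs q, harmS q <= c1 & harmY q <= L].
Proof.
move=> law0 law1 c1_ge0 feasible L_ge.
have [k0 [k1 budget]] := budget_split_exists law0 law1 c1_ge0 feasible L_ge.
have [D_gt|D_le] := ltP z11 (x11 - k1); first exact: coupling_D_overflow budget D_gt.
have [B_le|B_gt] := leP (x01 - k0) z01.
- exact: coupling_no_overflow budget D_le B_le.
- exact: coupling_B_overflow budget D_le B_gt.
Qed.

End Sharpness.

Lemma coupling_upperU_exists (R : realFieldType) (obs : bool -> bool -> bool -> R) c1 :
  observed_law obs false -> observed_law obs true -> 0 <= c1 ->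
  obs false false true + obs false true true - (obs true false true + obs true true true) <= c1 ->
  exists q, [/\ coupling obs q, harmS q <= c1 & upperU obs c1 <= harmY q].
Proof.
move=> [? ? ? ? ?] [? ? ? ? ?] c1_ge0 feasible.
pose obs' t y s := obs t (if t then ~~ y else y) s.
have := lexx (upperU obs c1); rewrite [X in _ <= X]/upperU /PY !le_min.
move=> /andP[/andP[? ?] /andP[? ?]].
have [||||q [/coupling_flipY[cq HSf HYf] HS HY]] :=
  coupling_harmY_le_exists (obs := obs')
    (L := obs false true false + obs false true true - upperU obs c1) _ _ c1_ge0.
- by split; rewrite /obs' //=; lra.
- by split; rewrite /obs' //=; lra.
- by rewrite /obs' /=; lra.
- by rewrite /lowerL /PY /obs' /= !ge_max; repeat (apply/andP; split); lra.
- by exists (q \o flipY); rewrite HSf HYf; split => //; lra.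
Qed.

Theorem proposition1 (R : realFieldType) (obs : bool -> bool -> bool -> R)
    (c1 c2 : R) (hc1 : 0 <= c1 <= 1) (hc2 : 0 <= c2 <= 1)
    (hne : exists p : world -> R, admissible obs c1 c2 p) :
  (forall p : world -> R, admissible obs c1 c2 p ->
     lowerL obs c1 <= HR_TY p <= upperU obs c1) /\
  (exists p : world -> R, admissible obs c1 c2 p /\ HR_TY p = lowerL obs c1) /\
  (exists p : world -> R, admissible obs c1 c2 p /\ HR_TY p = upperU obs c1).
Proof.
have [/andP[c1_ge0 _] /andP[c2_ge0 _]] := (hc1, hc2).
have [p /admissible_joint[cp p1 HSp _]] := hne.
have law t : observed_law obs t := coupling_observed_law t cp p1.
have feasible := le_trans (coupling_harmS_ge cp) HSp.
have bounds q : coupling obs q -> harmS q <= c1 -> lowerL obs c1 <= harmY q <= upperU obs c1.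
  by move=> cq; apply: coupling_harmY_bounds cq (coupling_total cq (law false)).
have lift_ok q : coupling obs q -> harmS q <= c1 ->
    admissible obs c1 c2 (lift_coupling q) /\ HR_TY (lift_coupling q) = harmY q.
  by move=> cq HS; apply: lift_admissible cq (coupling_total cq (law false)) HS c2_ge0.
split; [|split].
- by move=> p' /admissible_joint[cq _ HS ->]; exact: bounds.
- have [q [cq HS HY]] := coupling_harmY_le_exists (law false) (law true) c1_ge0 feasible (lexx _).
  exists (lift_coupling q); have [adm ->] := lift_ok q cq HS; split => //.
  by apply/le_anti; rewrite HY; case/andP: (bounds q cq HS).
- have [q [cq HS HY]] := coupling_upperU_exists (law false) (law true) c1_ge0 feasible.
  exists (lift_coupling q); have [adm ->] := lift_ok q cq HS; split => //.
  by apply/le_anti; rewrite HY andbT; case/andP: (bounds q cq HS).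
Qed.
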